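(* Let $1\le t\le k$ be integers and let $0\le\alpha<\frac{t+1}{k+1}$. Then there exists an election $(V,A,\succ)$ with $|A|\ge k$ such that no set $C\subseteq A$ with $|C|=k$ is $(t,\alpha)$-undominated.
   Context: An election $(V,A,\succ)$: finite nonempty voter set $V$ with $n=|V|$, finite candidate set $A$, and for each voter $v$ a strict linear order $\succ_v$ on $A$. For a voter $v$, a set $C\subseteq A$ with $|C|\ge t$ and $a\in A\setminus C$: $C\succ_v^t a$ iff $|\{c\in C: c\succ_v a\}|\ge t$; otherwise we write $a\succ_v^t C$. A set $C\subseteq A$ is $(t,\alpha)$-undominated if $|C|\ge t$ and for every $a\in A\setminus C$, $|\{v\in V: a\succ_v^t C\}|\le\lfloor\alpha n\rfloor$. *)

From HB Require Import structures.
From mathcomp Require Import all_boot all_order all_algebra.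
From mathcomp Require Import reals.
Set Implicit Arguments. Unset Strict Implicit. Unset Printing Implicit Defensive.
Import Order.TTheory GRing.Theory Num.Theory.

Definition strict_linear_order (A : finType) (r : rel A) : Prop :=
  irreflexive r /\ transitive r /\ (forall x y : A, x != y -> r x y || r y x).

(* C >_v^t a : at least t members of C are ranked above a by voter v.
   pref v x y means x >_v y. *)
Definition beats_t (V A : finType) (pref : V -> rel A) (t : nat)
    (v : V) (C : {set A}) (a : A) : bool :=
  t <= #|[set c in C | pref v c a]|.

(* (t,alpha)-undominated: |C| >= t and for every a outside C, the number of
   voters with a >_v^t C (i.e. not C >_v^t a) is at most floor(alpha * n). *)
Definition undominated (R : realType) (V A : finType) (pref : V -> rel A)
    (t : nat) (alpha : R) (C : {set A}) : Prop :=
  t <= #|C| /\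
  forall a : A, a \notin C ->
    (#|[set v : V | ~~ beats_t pref t v C a]|%:Z <= Num.floor (alpha * #|V|%:R))%R.

From HB Require Import structures.
From mathcomp Require Import all_boot all_order all_algebra.
From mathcomp Require Import reals.
From mathcomp Require Import zify lra.
Import Order.TTheory GRing.Theory Num.Theory.

(* Voters and candidates are the cells of a (k+1) x N torus, and each voter
   ranks cells lexicographically by cyclic distance from its own cell, first
   in the row and then in the column coordinate.  For a committee C of size k,
   the cycle lemma gives a row j0 such that every block of d consecutive rows
   starting at j0 meets C in fewer than d cells.  Let i be the row t steps
   after j0 and let a = (i, q) be a vacant cell whose cyclic successor in its
   row is occupied (if the row meets C at all).  Every voter whose row lies
   between j0 and i and whose column is not that successor ranks fewer than t
   members of C above a.  These are (t+1)(N-1) of the (k+1)N voters, a share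
   that exceeds alpha once N is large. *)

Set Implicit Arguments. Unset Strict Implicit. Unset Printing Implicit Defensive.

Section CyclicDistance.
Variable M : nat.
Implicit Types i j l w c : 'I_M.

Definition cdist j i : nat := if j <= i then i - j else i + M - j.

Lemma cdist_lt j i : cdist j i < M.
Proof. by rewrite /cdist; have := ltn_ord i; have := ltn_ord j; repeat case: ifP => ?; lia. Qed.

Lemma cdist_inj j : injective (cdist j).
Proof.
move=> i i' e; apply: val_inj; move: e; rewrite /cdist /=.
by have := ltn_ord i; have := ltn_ord i'; have := ltn_ord j; repeat case: ifP => ?; lia.
Qed.

Lemma cdist_onto j e : e < M -> exists i, cdist j i = e.
Proof.
move=> eM; have jM := ltn_ord j.
have iM : (if j + e < M then j + e else j + e - M) < M by repeat case: ifP => ?; lia.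
exists (Ordinal iM); rewrite /cdist /=.
by case: (ltnP (j + e) M) => ?; case: ifP => ?; lia.
Qed.

Lemma cdist_arc j w i c :
  cdist j w <= cdist j i -> cdist w c < cdist w i -> cdist j c < cdist j i.
Proof.
have := ltn_ord j; have := ltn_ord w; have := ltn_ord i; have := ltn_ord c.
by rewrite /cdist; repeat case: ifP => ?; lia.
Qed.

Lemma ordSE j : ordS j = (if j.+1 == M then 0 else j.+1) :> nat.
Proof.
rewrite /=; case: eqP => [-> | ne]; first exact: modnn.
by apply: modn_small; have := ltn_ord j; lia.
Qed.

Lemma cdist_ordS j q : ordS q != j -> cdist j (ordS q) = (cdist j q).+1.
Proof.
move=> /eqP qj; have {}qj : ordS q <> j :> nat by move=> /val_inj.
move: qj; rewrite /cdist ordSE.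
by have := ltn_ord q; have := ltn_ord j; repeat case: ifP => ?; lia.
Qed.

Lemma card_cdist_le j t : t < M -> #|[set i | cdist j i <= t]| = t.+1.
Proof.
move=> tM; pose f i := Ordinal (cdist_lt j i).
have f_inj : injective f by move=> i i' /(congr1 val) /cdist_inj.
have -> : [set i | cdist j i <= t] = f @^-1: [set e : 'I_M | e <= t].
  by apply/setP => i; rewrite !inE.
rewrite card_preimset //.
have -> : [set e : 'I_M | e <= t] = widen_ord tM @: [set: 'I_t.+1].
  apply/setP => e; rewrite inE; apply/idP/imsetP => [et | [e' _ ->] /=].
    by exists (Ordinal (et : e < t.+1)) => //; apply: val_inj.
  by rewrite -ltnS ltn_ord.
rewrite card_imset ?cardsT ?card_ord //.
by move=> e e' /(congr1 val) /= /val_inj.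
Qed.

End CyclicDistance.

Lemma last_argmax (m : nat) (g : nat -> nat) :
  exists2 j0, j0 <= m & forall j, j <= m -> g j <= g j0 /\ (j0 < j -> g j < g j0).
Proof.
have [i0 _ i0_max] := @arg_maxnP _ (@ord0 m) predT (fun j : 'I_m.+1 => g j) isT.
have [j0 /eqP gj0 j0_last] :=
  @arg_maxnP _ i0 (fun j : 'I_m.+1 => g j == g i0) val (eqxx _).
exists j0; first by rewrite -ltnS.
move=> j jm; have j_max : g j <= g i0 := i0_max (Ordinal (jm : j < m.+1)) isT.
split; first by rewrite gj0.
move=> j0j; rewrite ltn_neqAle gj0 j_max andbT; apply/negP => /eqP gj.
by have := j0_last (Ordinal (jm : j < m.+1)); rewrite /= gj eqxx => /(_ isT); lia.
Qed.

Section CycleLemma.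
Variables (M : nat) (n : 'I_M -> nat).

Definition prefix_sum (x : nat) : nat := \sum_(l : 'I_M | l < x) n l.

Lemma prefix_sum0 : prefix_sum 0 = 0.
Proof. exact: big_pred0. Qed.

Lemma prefix_sum_full x : M <= x -> prefix_sum x = \sum_l n l.
Proof. by move=> Mx; apply: eq_bigl => l; have := ltn_ord l; lia. Qed.

(* When the block wraps around, its tail is the initial block of length
   j + d - M; otherwise that term is prefix_sum 0 by truncated subtraction. *)
Lemma cyclic_block_sum (j : 'I_M) d : d <= M ->
  \sum_(l : 'I_M | cdist j l < d) n l + prefix_sum j =
  prefix_sum (j + d) + prefix_sum (j + d - M).
Proof.
move=> dM; have jM := ltn_ord j; rewrite (bigID (fun l : 'I_M => j <= l)) /=.
rewrite [prefix_sum (j + d)](bigID (fun l : 'I_M => l < j)) /=.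
have eqP1 : \sum_(l : 'I_M | (l < j + d) && (l < j)) n l = prefix_sum j.
  by apply: eq_bigl => l; lia.
have eqP2 : \sum_(l : 'I_M | (cdist j l < d) && (j <= l)) n l =
            \sum_(l : 'I_M | (l < j + d) && ~~ (l < j)) n l.
  by apply: eq_bigl => l; rewrite /cdist; have := ltn_ord l; repeat case: ifP => ?; lia.
have eqP3 : \sum_(l : 'I_M | (cdist j l < d) && ~~ (j <= l)) n l = prefix_sum (j + d - M).
  by apply: eq_bigl => l; rewrite /cdist; have := ltn_ord l; repeat case: ifP => ?; lia.
by rewrite eqP1 eqP2 eqP3 addnC addnA.
Qed.

(* The cycle lemma: j0 is the last maximiser of x |-> prefix_sum x - x. *)
Lemma cycle_lemma : \sum_l n l < M ->
  exists j0 : 'I_M, forall d, 0 < d <= M -> \sum_(l : 'I_M | cdist j0 l < d) n l < d.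
Proof.
move=> sumM.
have [j0 j0M j0_max] := last_argmax M (fun x => prefix_sum x + (M - x)).
have j0_lt : j0 < M.
  rewrite ltn_neqAle j0M andbT; apply/eqP => j0E.
  have := (j0_max 0 (leq0n _)).1.
  by rewrite j0E prefix_sum0 prefix_sum_full // subnn; lia.
exists (Ordinal j0_lt) => d /andP [d0 dM].
have := cyclic_block_sum (Ordinal j0_lt) dM; rewrite /=.
case: (leqP (j0 + d) M) => jd.
- have -> : j0 + d - M = 0 by lia.
  have := (j0_max (j0 + d) jd).2; rewrite prefix_sum0; lia.
- rewrite (prefix_sum_full (ltnW jd)).
  have := (j0_max (j0 + d - M) (ltac:(lia))).1; lia.
Qed.

End CycleLemma.

Lemma exists_gap N (S : {set 'I_N}) (p0 : 'I_N) :
  p0 \notin S -> exists2 q, q \notin S & (S != set0 -> ordS q \in S).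
Proof.
move=> p0S; have [S0 | [p pS]] := set_0Vmem S; first by exists p0; rewrite // S0 eqxx.
have [p1 p1S p1_min] := arg_minnP (fun p => cdist p0 p) pS.
exists (ord_pred p1); last by rewrite ord_predK.
apply/negP => /p1_min; rewrite -{1}(ord_predK p1) cdist_ordS ?ltnn //.
by rewrite ord_predK; apply: contraNneq p0S => <-.
Qed.

Lemma lex_ltn N a b c d : b < N -> d < N ->
  (a * N + b < c * N + d) = (a < c) || (a == c) && (b < d).
Proof. by move=> bN dN; case: (ltngtP a c) => [ac | ca | <-] /=; nia. Qed.

Section CyclicElection.
Variables M N : nat.
Local Notation cell := ('I_M * 'I_N)%type.
Implicit Types w x y : cell.

Definition cyclic_key w x : nat := cdist w.1 x.1 * N + cdist w.2 x.2.

Definition cyclic_pref w : rel cell := fun x y => cyclic_key w x < cyclic_key w y.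

Lemma cyclic_prefE w x y : cyclic_pref w x y =
  (cdist w.1 x.1 < cdist w.1 y.1) ||
  (cdist w.1 x.1 == cdist w.1 y.1) && (cdist w.2 x.2 < cdist w.2 y.2).
Proof. exact: lex_ltn (cdist_lt _ _) (cdist_lt _ _). Qed.

Lemma cyclic_key_inj w : injective (cyclic_key w).
Proof.
move=> x y e.
have : ~~ cyclic_pref w x y && ~~ cyclic_pref w y x by rewrite /cyclic_pref e ltnn.
rewrite !cyclic_prefE; case: ltngtP => //= /cdist_inj e1.
case: ltngtP => //= /cdist_inj e2 _.
by rewrite [x]surjective_pairing [y]surjective_pairing e1 e2.
Qed.

Lemma cyclic_pref_slo w : strict_linear_order (cyclic_pref w).
Proof.
split; first by move=> x; exact: ltnn.
split; first by move=> y x z; exact: ltn_trans.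
move=> x y; apply: contraNT; rewrite /cyclic_pref negb_or -!leqNgt => le_xy.
by apply/eqP/(@cyclic_key_inj w); apply/eqP; rewrite eqn_leq andbC.
Qed.

End CyclicElection.

Section BadCandidate.
Variables (k N t : nat) (C : {set 'I_k.+1 * 'I_N}).
Hypotheses (t_gt0 : 0 < t) (t_le_k : t <= k) (k_lt_N : k < N) (card_C : #|C| = k).
Local Notation M := k.+1.

Definition occupied (l : 'I_M) : {set 'I_N} := [set p | (l, p) \in C].

Lemma card_occupied l : #|[set c in C | c.1 == l]| = #|occupied l|.
Proof.
have -> : [set c in C | c.1 == l] = [set (l, p) | p in occupied l].
  apply/setP => -[l' p]; rewrite !inE /=.
  apply/andP/imsetP => [[lpC /eqP l'l] | [p' p'_row [-> ->]]].
    by subst l'; exists p; rewrite ?inE.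
  by rewrite inE in p'_row; split.
by rewrite card_imset // => p p' [].
Qed.

Lemma card_occupied_rows (P : pred 'I_M) :
  #|[set c in C | P c.1]| = \sum_(l | P l) #|occupied l|.
Proof.
rewrite -sum1_card (partition_big (fun c : 'I_M * 'I_N => c.1) P) /=; last first.
  by move=> c; rewrite inE => /andP [].
apply: eq_bigr => l Pl; rewrite -card_occupied -sum1_card; apply: eq_bigl => c.
rewrite !inE; apply/idP/idP => [/andP [/andP [-> _] ->] // | /andP [-> /eqP c1]].
by rewrite c1 Pl eqxx.
Qed.

Lemma few_ranked_above (j0 i : 'I_M) (q : 'I_N) (w : 'I_M * 'I_N) :
  cdist j0 w.1 <= cdist j0 i -> w.2 != ordS q ->
  (occupied i != set0 -> ordS q \in occupied i) ->
  #|[set c in C | cyclic_pref w c (i, q)]| <=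
    \sum_(l | cdist j0 l < cdist j0 i) #|occupied l| + (#|occupied i| - 1).
Proof.
move=> w_on_arc wq succ_in.
set earlier := [set c in C | cdist j0 c.1 < cdist j0 i].
set rest := [set c in C | c.1 == i] :\ (i, ordS q).
have above_sub : [set c in C | cyclic_pref w c (i, q)] \subset earlier :|: rest.
  apply/subsetP => c; rewrite !inE cyclic_prefE /= => /andP [cC].
  case/orP => [/(cdist_arc w_on_arc) -> | /andP [/eqP /cdist_inj c1 cq]].
    by rewrite cC.
  rewrite cC c1 eqxx !andbT; apply/orP; right; apply: contraTneq cq => ->.
  by rewrite cdist_ordS 1?eq_sym // ltnNge leqnSn.
have card_rest : #|rest| <= #|occupied i| - 1.
  rewrite -card_occupied; have [empty | /succ_in succ_occ] := eqVneq (occupied i) set0.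
    have : #|rest| <= #|[set c in C | c.1 == i]| by apply/subset_leq_card/subD1set.
    by rewrite card_occupied empty cards0; lia.
  have succ_cell : (i, ordS q) \in [set c in C | c.1 == i].
    by move: succ_occ; rewrite !inE /= eqxx andbT.
  by rewrite [#|[set c in C | _]|](cardsD1 (i, ordS q)) succ_cell add1n subn1.
rewrite -card_occupied_rows; apply: leq_trans (subset_leq_card above_sub) _.
by apply: leq_trans (leq_card_setU _ _) _; rewrite leq_add2l.
Qed.

Lemma exists_badly_beaten_candidate : exists2 a, a \notin C &
  t.+1 * N.-1 <= #|[set w | ~~ beats_t (@cyclic_pref M N) t w C a]|.
Proof.
have sum_rows : \sum_l #|occupied l| = k.
  rewrite -(card_occupied_rows predT) -[RHS]card_C.
  by apply: eq_card => c; rewrite !inE andbT.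
have [j0 j0_blocks] : exists j0 : 'I_M, forall d, 0 < d <= M ->
    \sum_(l | cdist j0 l < d) #|occupied l| < d by apply: cycle_lemma; rewrite sum_rows.
have [i di] : exists i, cdist j0 i = t by apply: cdist_onto; lia.
have before_i : \sum_(l | cdist j0 l < t) #|occupied l| < t by apply: j0_blocks; lia.
have upto_i : \sum_(l | cdist j0 l < t) #|occupied l| + #|occupied i| < t.+1.
  have := j0_blocks t.+1 (ltac:(lia)); rewrite (bigD1 i) ?di //= addnC.
  congr (_ + _ < _); apply: eq_bigl => l.
  rewrite ltnS leq_eqVlt -di (inj_eq (@cdist_inj _ j0)).
  by case: eqVneq => [-> | _] /=; rewrite ?ltnn ?andbT.
have [p0 p0_free] : exists p0, p0 \notin occupied i.
  have [p0] : exists p0, p0 \in ~: occupied i.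
    by apply/card_gt0P; have := cardsC (occupied i); rewrite card_ord; lia.
  by rewrite inE; exists p0.
have [q q_free q_succ] := exists_gap p0_free.
exists (i, q); first by move: q_free; rewrite inE.
set W := [set w : 'I_M * 'I_N | (cdist j0 w.1 <= t) && (w.2 != ordS q)].
have card_W : #|W| = t.+1 * N.-1.
  have -> : W = setX [set j | cdist j0 j <= t] [set~ ordS q].
    by apply/setP => -[x y]; rewrite !inE.
  by rewrite cardsX card_cdist_le 1?cardsC1 ?card_ord //; lia.
rewrite -card_W; apply: subset_leq_card; apply/subsetP => w.
rewrite !inE => /andP [w_on_arc wq]; rewrite /beats_t -ltnNge.
have w_on_arc' : cdist j0 w.1 <= cdist j0 i by rewrite di.
apply: leq_ltn_trans (few_ranked_above w_on_arc' wq q_succ) _.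
by rewrite di; lia.
Qed.

End BadCandidate.

Lemma exists_large_torus (R : realType) (alpha : R) (t k : nat) :
  (alpha < t.+1%:R / k.+1%:R)%R ->
  exists2 N, k < N & (alpha * (k.+1 * N)%:R < (t.+1 * N.-1)%:R)%R.
Proof.
move=> alpha_lt.
have alphaM : (alpha * k.+1%:R < t.+1%:R)%R by rewrite -ltr_pdivlMr ?ltr0n.
pose gap : R := (t.+1%:R - alpha * k.+1%:R)%R.
have gap_gt0 : (0 < gap)%R by rewrite subr_gt0.
pose N := (Num.trunc (t.+1%:R / gap)).+1 + k.+1.
have N_large : (t.+1%:R / gap < N%:R)%R.
  by apply: lt_le_trans (truncnS_gt _) _; rewrite ler_nat leq_addr.
exists N; first by rewrite /N; lia.
have : (t.+1%:R < N%:R * gap)%R by rewrite -ltr_pdivrMr.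
have -> : ((t.+1 * N.-1)%:R = t.+1%:R * (N%:R - 1) :> R)%R.
  have N_gt0 : 0 < N by rewrite /N; lia.
  by rewrite natrM -[in RHS](prednK N_gt0) -[N.-1.+1]addn1 natrD addrK.
rewrite natrM /gap; lra.
Qed.

Theorem theorem3 (R : realType) (t k : nat) (alpha : R) :
  1 <= t -> t <= k ->
  (0 <= alpha)%R -> (alpha < t.+1%:R / k.+1%:R)%R ->
  exists (V A : finType) (pref : V -> rel A),
    [/\ 0 < #|V|, (forall v : V, strict_linear_order (pref v)), k <= #|A|
      & forall C : {set A}, #|C| = k -> ~ undominated pref t alpha C].
Proof.
move=> t_gt0 t_le_k _ alpha_lt.
have [N k_lt_N share] := exists_large_torus alpha_lt.
exists ('I_k.+1 * 'I_N)%type, ('I_k.+1 * 'I_N)%type, (@cyclic_pref k.+1 N).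
split; rewrite ?card_prod ?card_ord; [lia | exact: cyclic_pref_slo | nia |].
move=> C card_C [_ C_undom].
have [a aC many_against] := exists_badly_beaten_candidate t_gt0 t_le_k k_lt_N card_C.
have := C_undom a aC; rewrite card_prod !card_ord floor_ge_int -pmulrn => against_le.
have : ((t.+1 * N.-1)%:R <= alpha * (k.+1 * N)%:R :> R)%R.
  by apply: le_trans against_le; rewrite ler_nat.
by rewrite leNgt share.
Qed.
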